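(* Let $(X,f)$, $(Y,g)$ be dynamical systems, $\pi\colon(X,f)\to(Y,g)$ a factor map such that $\pi^{-1}(y)$ is at most countable for every $y\in Y$, and let $z_1,z_2\in X$ with $\pi(z_1)\ne\pi(z_2)$. Let $\varepsilon=d(\pi(z_1),\pi(z_2))/3$ and let $\delta>0$ be such that $d(a,b)<\delta$ implies $d(\pi(a),\pi(b))<\varepsilon$ for $a,b\in X$. Suppose $S\subset X$ is a dense Mycielski syndetically scrambled set for $f$ such that for any two distinct $x_1,x_2\in S$ there is an infinite set $M\subset\mathbb N$ with $d(z_i,f^n(x_i))<\delta$ for $i=1,2$ and all $n\in M$. Then $g$ has a dense Mycielski syndetically $\varepsilon$-scrambled set $T\subset\pi(S)$. Moreover, if $f^k(S)\subset S$ for some $k\in\mathbb N$, then $T$ may be chosen with $g^k(T)\subset T$.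
   Context: Dynamical system: compact metric space with continuous self-map. Factor map: continuous surjection $\pi$ with $\pi\circ f=g\circ\pi$. Syndetic: subset of $\mathbb N$ meeting every set with arbitrarily long runs of consecutive integers. $\mathrm{Asy}$ and $\mathrm{SProx}$: pairs with $d(f^nx,f^ny)\to0$, resp. with $\{n:d(f^nx,f^ny)<\eta\}$ syndetic for all $\eta>0$. A set with at least two points is syndetically scrambled if all distinct pairs lie in $\mathrm{SProx}\setminus\mathrm{Asy}$; syndetically $\varepsilon$-scrambled if moreover $\limsup_n d(g^nx,g^ny)\ge\varepsilon$ for all distinct pairs. Mycielski set: countable union of Cantor sets. *)

From Stdlib Require Import Reals.
Open Scope R_scope.

Definition is_metric {X : Type} (d : X -> X -> R) : Prop :=
  (forall x y, 0 <= d x y) /\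
  (forall x y, d x y = 0 <-> x = y) /\
  (forall x y, d x y = d y x) /\
  (forall x y z, d x z <= d x y + d y z).

Definition open_set {X : Type} (d : X -> X -> R) (U : X -> Prop) : Prop :=
  forall x, U x -> exists r, 0 < r /\ forall y, d x y < r -> U y.

Definition compact_space {X : Type} (d : X -> X -> R) : Prop :=
  forall (I : Type) (U : I -> X -> Prop),
    (forall i, open_set d (U i)) -> (forall x, exists i, U i x) ->
    exists l : list I, forall x, exists i, List.In i l /\ U i x.

Definition compact_metric_space {X : Type} (d : X -> X -> R) : Prop :=
  is_metric d /\ compact_space d.

Definition continuous_map {X Y : Type} (dX : X -> X -> R) (dY : Y -> Y -> R)
  (h : X -> Y) : Prop :=
  forall x eps, 0 < eps -> exists del, 0 < del /\
    forall x', dX x x' < del -> dY (h x) (h x') < eps.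

Definition dynamical_system {X : Type} (d : X -> X -> R) (f : X -> X) : Prop :=
  compact_metric_space d /\ continuous_map d d f.

Definition factor_map {X Y : Type} (dX : X -> X -> R) (dY : Y -> Y -> R)
  (f : X -> X) (g : Y -> Y) (p : X -> Y) : Prop :=
  continuous_map dX dY p /\ (forall y, exists x, p x = y) /\
  (forall x, p (f x) = g (p x)).

Definition iter {X : Type} (n : nat) (f : X -> X) (x : X) : X := Nat.iter n f x.

Definition infinite_nat (A : nat -> Prop) : Prop :=
  forall N, exists n, (N <= n)%nat /\ A n.

Definition thick (B : nat -> Prop) : Prop :=
  forall L, exists m, forall i, (i < L)%nat -> B (m + i)%nat.

Definition syndetic (A : nat -> Prop) : Prop :=
  forall B, thick B -> exists n, A n /\ B n.

Definition Asy {X : Type} (d : X -> X -> R) (f : X -> X) (x y : X) : Prop :=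
  forall eta, 0 < eta -> exists N, forall n, (N <= n)%nat ->
    d (iter n f x) (iter n f y) < eta.

Definition SProx {X : Type} (d : X -> X -> R) (f : X -> X) (x y : X) : Prop :=
  forall eta, 0 < eta -> syndetic (fun n => d (iter n f x) (iter n f y) < eta).

Definition syndetically_scrambled {X : Type} (d : X -> X -> R) (f : X -> X)
  (S : X -> Prop) : Prop :=
  (exists x y, S x /\ S y /\ x <> y) /\
  (forall x y, S x -> S y -> x <> y -> SProx d f x y /\ ~ Asy d f x y).

(* limsup_n d(f^n x, f^n y) >= eps *)
Definition limsup_ge {X : Type} (d : X -> X -> R) (f : X -> X) (x y : X)
  (eps : R) : Prop :=
  forall eta, 0 < eta -> forall N, exists n, (N <= n)%nat /\
    eps - eta < d (iter n f x) (iter n f y).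

Definition syndetically_eps_scrambled {X : Type} (d : X -> X -> R)
  (f : X -> X) (eps : R) (S : X -> Prop) : Prop :=
  syndetically_scrambled d f S /\
  (forall x y, S x -> S y -> x <> y -> limsup_ge d f x y eps).

(* Cantor set: image of the Cantor space {0,1}^N (product topology) under a
   continuous injection; since {0,1}^N is compact and X is Hausdorff this is
   exactly a subset homeomorphic to the Cantor set. *)
Definition cantor_set {X : Type} (d : X -> X -> R) (C : X -> Prop) : Prop :=
  exists h : (nat -> bool) -> X,
    (forall s eps, 0 < eps -> exists N, forall t,
        (forall i, (i < N)%nat -> t i = s i) -> d (h s) (h t) < eps) /\
    (forall s t, h s = h t -> s = t) /\
    (forall x, C x <-> exists s, h s = x).

Definition mycielski {X : Type} (d : X -> X -> R) (S : X -> Prop) : Prop :=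
  exists C : nat -> X -> Prop, (forall n, cantor_set d (C n)) /\
    (forall x, S x <-> exists n, C n x).

Definition dense {X : Type} (d : X -> X -> R) (S : X -> Prop) : Prop :=
  forall x eps, 0 < eps -> exists s, S s /\ d x s < eps.

Definition countable_fibres {X Y : Type} (p : X -> Y) : Prop :=
  forall y, exists c : X -> nat, forall x1 x2,
    p x1 = y -> p x2 = y -> c x1 = c x2 -> x1 = x2.

(* The candidate set is simply T = p(S).  The hypothesis on the points z1, z2
   is the heart of the argument: whenever f^n x1 and f^n x2 are delta-close to
   z1 and z2, the points g^n (p x1) and g^n (p x2) are eps-close to p z1 and
   p z2, which are 3 eps apart, so they are more than eps apart.  This happens
   infinitely often for distinct x1, x2 in S, which gives at once
   - injectivity of p on S (so p maps Cantor sets in S onto Cantor sets),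
   - non-asymptoticity and limsup >= eps for distinct pairs of p(S).
   Syndetic proximality is pushed forward by the uniform continuity of p
   (compactness of X), density by continuity and surjectivity of p, and
   forward invariance under f^k by the semiconjugacy p o f^n = g^n o p.
   The file proves these transfer facts for a general map first and derives
   the proposition from them at the end. *)
From Stdlib Require Import Reals Lra List Classical.
Open Scope R_scope.

Definition image {X Y : Type} (p : X -> Y) (S : X -> Prop) : Y -> Prop :=
  fun y => exists x, S x /\ p x = y.

Definition injective_on {X Y : Type} (p : X -> Y) (S : X -> Prop) : Prop :=
  forall x1 x2, S x1 -> S x2 -> p x1 = p x2 -> x1 = x2.

Definition uniformly_continuous {X Y : Type} (dX : X -> X -> R)
  (dY : Y -> Y -> R) (h : X -> Y) : Prop :=
  forall eta, 0 < eta -> exists del, 0 < del /\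
    forall a b, dX a b < del -> dY (h a) (h b) < eta.

Definition frequently_far {Y : Type} (d : Y -> Y -> R) (g : Y -> Y)
  (y1 y2 : Y) (eps : R) : Prop :=
  forall N, exists n, (N <= n)%nat /\ eps < d (iter n g y1) (iter n g y2).

Lemma dist_self {X : Type} (d : X -> X -> R) (x : X) :
  is_metric d -> d x x = 0.
Proof. intros (_ & Hz & _). now apply Hz. Qed.

Lemma finite_positive_lower_bound {I : Type} (r : I -> R) (l : list I) :
  (forall i, 0 < r i) -> exists m, 0 < m /\ forall i, In i l -> m <= r i.
Proof.
  intros Hr; induction l as [|a l [m [Hm Hml]]].
  - exists 1; split; [lra | intros i []].
  - exists (Rmin (r a) m); split; [now apply Rmin_glb_lt|].
    intros i [<- | Hi].
    + apply Rmin_l.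
    + eapply Rle_trans; [apply Rmin_r | auto].
Qed.

(* Cover X by the balls B(x, r_x/2), where r_x witnesses
   continuity at x for eta/2, and take the least radius of a finite
   subcover. *)
Lemma compact_uniformly_continuous {X Y : Type} (dX : X -> X -> R)
  (dY : Y -> Y -> R) (h : X -> Y) :
  compact_metric_space dX -> is_metric dY -> continuous_map dX dY h ->
  uniformly_continuous dX dY h.
Proof.
  intros [HXm Hcpt] HYm Hh eta Heta.
  pose proof HXm as (_ & _ & _ & Xtri).
  pose proof HYm as (_ & _ & Ysym & Ytri).
  set (I := {x : X & {r : R | 0 < r /\
              forall x', dX x x' < r -> dY (h x) (h x') < eta / 2}}).
  set (radius := fun i : I => proj1_sig (projT2 i) / 2).
  assert (Hradius : forall i, 0 < radius i).
  { intros i; unfold radius; destruct (proj2_sig (projT2 i)); lra. }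
  destruct (Hcpt I (fun i y => dX (projT1 i) y < radius i)) as [l Hl].
  - intros i y Hy; exists (radius i - dX (projT1 i) y); split; [lra|].
    intros z Hz; pose proof (Xtri (projT1 i) y z); lra.
  - intros x; destruct (Hh x (eta / 2)) as [r [Hr Hcont]]; [lra|].
    exists (existT _ x (exist _ r (conj Hr Hcont))).
    unfold radius; simpl; rewrite (dist_self dX x HXm); lra.
  - destruct (finite_positive_lower_bound radius l Hradius) as [m [Hm Hml]].
    exists m; split; [exact Hm|].
    intros a b Hab; destruct (Hl a) as [[x [r [Hr Hcont]]] [Hin Hxa]].
    pose proof (Hml _ Hin) as Hmr; unfold radius in Hxa, Hmr; simpl in *.
    assert (Hxb : dX x b < r) by (pose proof (Xtri x a b); lra).
    pose proof (Hcont a ltac:(lra)); pose proof (Hcont b Hxb).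
    pose proof (Ytri (h a) (h x) (h b)); rewrite (Ysym (h a) (h x)) in *; lra.
Qed.

Lemma iter_semiconj {X Y : Type} (f : X -> X) (g : Y -> Y) (p : X -> Y) :
  (forall x, p (f x) = g (p x)) -> forall n x, p (iter n f x) = iter n g (p x).
Proof.
  intros H n x; induction n as [|n IH]; unfold iter in *; simpl; auto.
  now rewrite H, IH.
Qed.

Lemma syndetic_mono (A B : nat -> Prop) :
  syndetic A -> (forall n, A n -> B n) -> syndetic B.
Proof. intros HA HAB C HC; destruct (HA C HC) as [n [H1 H2]]; eauto. Qed.

Lemma far_from_separated_centres {Y : Type} (d : Y -> Y -> R)
  (a b u v : Y) (eps : R) :
  is_metric d -> d a b = 3 * eps -> d a u < eps -> d b v < eps ->
  eps < d u v.
Proof.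
  intros (_ & _ & Hsym & Htri) Hab Hau Hbv.
  pose proof (Htri a u b); pose proof (Htri u v b); rewrite (Hsym v b) in *.
  lra.
Qed.

Lemma not_asy_of_frequently_far {Y : Type} (d : Y -> Y -> R) (g : Y -> Y)
  (y1 y2 : Y) (eps : R) :
  0 < eps -> frequently_far d g y1 y2 eps -> ~ Asy d g y1 y2.
Proof.
  intros Heps Hfar Hasy; destruct (Hasy eps Heps) as [N HN].
  destruct (Hfar N) as [n [Hn Hd]]; pose proof (HN n Hn); lra.
Qed.

Lemma limsup_ge_of_frequently_far {Y : Type} (d : Y -> Y -> R) (g : Y -> Y)
  (y1 y2 : Y) (eps : R) :
  frequently_far d g y1 y2 eps -> limsup_ge d g y1 y2 eps.
Proof.
  intros Hfar eta Heta N; destruct (Hfar N) as [n [Hn Hd]].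
  exists n; split; [exact Hn | lra].
Qed.

Section FactorTransfer.

Variables (X Y : Type) (dX : X -> X -> R) (dY : Y -> Y -> R).
Variables (f : X -> X) (g : Y -> Y) (p : X -> Y).

Lemma injective_on_of_frequently_far (S : X -> Prop) (eps : R) :
  is_metric dY -> 0 <= eps ->
  (forall x1 x2, S x1 -> S x2 -> x1 <> x2 ->
     frequently_far dY g (p x1) (p x2) eps) ->
  injective_on p S.
Proof.
  intros HYm Heps Hfar x1 x2 H1 H2 Hp.
  apply NNPP; intros Hne; destruct (Hfar x1 x2 H1 H2 Hne 0%nat) as [n [_ Hd]].
  rewrite Hp, (dist_self dY _ HYm) in Hd; lra.
Qed.

Lemma dense_image (S : X -> Prop) :
  continuous_map dX dY p -> (forall y, exists x, p x = y) ->
  dense dX S -> dense dY (image p S).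
Proof.
  intros Hpc Hps HSd y e He; destruct (Hps y) as [x <-].
  destruct (Hpc x e He) as [del [Hdel Hcont]].
  destruct (HSd x del Hdel) as [s [Hs Hxs]].
  exists (p s); split; [exists s; auto | auto].
Qed.

Lemma cantor_set_image (C : X -> Prop) :
  continuous_map dX dY p -> injective_on p C ->
  cantor_set dX C -> cantor_set dY (image p C).
Proof.
  intros Hpc Hinj [h [Hcont [Hinjh Hrange]]].
  exists (fun s => p (h s)); split; [|split].
  - intros s e He; destruct (Hpc (h s) e He) as [del [Hdel Hp]].
    destruct (Hcont s del Hdel) as [N HN]; exists N; auto.
  - intros s t E; apply Hinjh, Hinj; auto; apply Hrange; eauto.
  - intros y; split.
    + intros [x [Hx <-]]; apply Hrange in Hx; destruct Hx as [s <-]; eauto.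
    + intros [s <-]; exists (h s); split; auto; apply Hrange; eauto.
Qed.

Lemma mycielski_image (S : X -> Prop) :
  continuous_map dX dY p -> injective_on p S ->
  mycielski dX S -> mycielski dY (image p S).
Proof.
  intros Hpc Hinj [C [HC HS]].
  exists (fun n => image p (C n)); split.
  - intros n; apply cantor_set_image; auto.
    intros x1 x2 H1 H2; apply Hinj; apply HS; eauto.
  - intros y; split.
    + intros [x [Hx <-]]; apply HS in Hx; destruct Hx as [n Hn].
      exists n, x; auto.
    + intros [n [x [Hx <-]]]; exists x; split; auto; apply HS; eauto.
Qed.

Lemma sprox_image (x1 x2 : X) :
  uniformly_continuous dX dY p ->
  (forall n x, p (iter n f x) = iter n g (p x)) ->
  SProx dX f x1 x2 -> SProx dY g (p x1) (p x2).
Proof.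
  intros Hunif Hit Hsp eta Heta; destruct (Hunif eta Heta) as [del [Hdel Hp]].
  apply (syndetic_mono _ _ (Hsp del Hdel)); intros n Hn.
  rewrite <- !Hit; auto.
Qed.

Lemma syndetically_eps_scrambled_image (S : X -> Prop) (eps : R) :
  is_metric dY -> 0 < eps -> uniformly_continuous dX dY p ->
  (forall n x, p (iter n f x) = iter n g (p x)) ->
  syndetically_scrambled dX f S ->
  (forall x1 x2, S x1 -> S x2 -> x1 <> x2 ->
     frequently_far dY g (p x1) (p x2) eps) ->
  syndetically_eps_scrambled dY g eps (image p S).
Proof.
  intros HYm Heps Hunif Hit [[x [y [Hx [Hy Hxy]]]] HSs] Hfar.
  assert (Hinj : injective_on p S)
    by (apply (injective_on_of_frequently_far S eps); auto; lra).
  assert (Hpreimage : forall y1 y2, image p S y1 -> image p S y2 -> y1 <> y2 ->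
    exists x1 x2, S x1 /\ S x2 /\ x1 <> x2 /\ p x1 = y1 /\ p x2 = y2).
  { intros y1 y2 [x1 [H1 <-]] [x2 [H2 <-]] Hne.
    exists x1, x2; repeat split; auto; intros ->; auto. }
  split; [split|].
  - exists (p x), (p y); split; [now exists x | split; [now exists y |]].
    intros E; apply Hxy, Hinj; auto.
  - intros y1 y2 Hy1 Hy2 Hne.
    destruct (Hpreimage y1 y2 Hy1 Hy2 Hne) as (x1 & x2 & H1 & H2 & Hx12 & <- & <-).
    split.
    + apply sprox_image; auto; now apply HSs.
    + apply (not_asy_of_frequently_far _ _ _ _ eps); auto.
  - intros y1 y2 Hy1 Hy2 Hne.
    destruct (Hpreimage y1 y2 Hy1 Hy2 Hne) as (x1 & x2 & H1 & H2 & Hx12 & <- & <-).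
    apply limsup_ge_of_frequently_far; auto.
Qed.

Lemma image_forward_invariant (S : X -> Prop) (k : nat) :
  (forall n x, p (iter n f x) = iter n g (p x)) ->
  (forall x, S x -> S (iter k f x)) ->
  forall y, image p S y -> image p S (iter k g y).
Proof. intros Hit Hk y [x [Hx <-]]; exists (iter k f x); auto. Qed.

End FactorTransfer.

Theorem proposition3p18
  (X Y : Type) (dX : X -> X -> R) (dY : Y -> Y -> R)
  (f : X -> X) (g : Y -> Y) (p : X -> Y)
  (HX : dynamical_system dX f) (HY : dynamical_system dY g)
  (Hp : factor_map dX dY f g p) (Hfib : countable_fibres p)
  (z1 z2 : X) (Hz : p z1 <> p z2)
  (eps : R) (Heps : eps = dY (p z1) (p z2) / 3)
  (delta : R) (Hdelta : 0 < delta)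
  (Hdel : forall a b, dX a b < delta -> dY (p a) (p b) < eps)
  (S : X -> Prop) (HSd : dense dX S) (HSm : mycielski dX S)
  (HSs : syndetically_scrambled dX f S)
  (HSM : forall x1 x2, S x1 -> S x2 -> x1 <> x2 ->
     exists M : nat -> Prop, infinite_nat M /\
       forall n, M n -> dX z1 (iter n f x1) < delta /\ dX z2 (iter n f x2) < delta) :
  (exists T : Y -> Prop,
     (forall y, T y -> exists x, S x /\ p x = y) /\
     dense dY T /\ mycielski dY T /\ syndetically_eps_scrambled dY g eps T) /\
  (forall k : nat, (forall x, S x -> S (iter k f x)) ->
   exists T : Y -> Prop,
     (forall y, T y -> exists x, S x /\ p x = y) /\
     dense dY T /\ mycielski dY T /\ syndetically_eps_scrambled dY g eps T /\
     (forall y, T y -> T (iter k g y))).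
Proof.
  destruct HX as [HXc _], HY as [[HYm _] _], Hp as [Hpc [Hps Hpf]].
  pose proof (iter_semiconj f g p Hpf) as Hit.
  assert (Hepos : 0 < eps).
  { pose proof (proj1 HYm (p z1) (p z2)).
    assert (dY (p z1) (p z2) <> 0) by (intros E; apply Hz, HYm, E); lra. }
  assert (Hfar : forall x1 x2, S x1 -> S x2 -> x1 <> x2 ->
            frequently_far dY g (p x1) (p x2) eps).
  { intros x1 x2 H1 H2 Hne N; destruct (HSM x1 x2 H1 H2 Hne) as [M [HM Hvisit]].
    destruct (HM N) as [n [Hn HMn]]; exists n; split; [exact Hn|].
    destruct (Hvisit n HMn) as [Hv1 Hv2]; rewrite <- !Hit.
    apply (far_from_separated_centres dY (p z1) (p z2)); auto; lra. }
  assert (Hinj : injective_on p S)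
    by (apply (injective_on_of_frequently_far X Y dY g p S eps); auto; lra).
  assert (HT : dense dY (image p S) /\ mycielski dY (image p S) /\
               syndetically_eps_scrambled dY g eps (image p S)).
  { split; [|split].
    - now apply (dense_image X Y dX).
    - now apply (mycielski_image X Y dX).
    - apply (syndetically_eps_scrambled_image X Y dX dY f); auto.
      now apply compact_uniformly_continuous. }
  split; [exists (image p S); auto | intros k Hk; exists (image p S)].
  repeat split; try apply HT; auto.
  now apply (image_forward_invariant X Y f g p S k).
Qed.
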